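(* Let $\boldsymbol{\Sigma}$ be a given $n\times n$ positive definite covariance matrix, and consider its multi-resolution decomposition (defined in the context) with $M$ resolutions and the same number $r_m=r$ of knots per region at every resolution $m=0,\dots,M$, so that $N=(M+1)r$. Then $\mathbf{B}=\mathrm{mrd}(\boldsymbol{\Sigma})$ can be computed in $\mathcal{O}(nN^2)$ time using the recursion defining the MRD.
   Context: Setting for the MRD. Grid indices $\mathcal{I}=\{1,\dots,n\}$ are recursively partitioned: for $m=0,\dots,M-1$ and $(j_1,\dots,j_m)\in\{1,\dots,J\}^m$, $\mathcal{I}_{j_1,\dots,j_m}$ (with $\mathcal{I}_{\emptyset}=\mathcal{I}$) is the disjoint union of $\mathcal{I}_{j_1,\dots,j_m,j_{m+1}}$, $j_{m+1}=1,\dots,J$; indices are ordered so finest sets $\mathcal{I}_{j_1,\dots,j_M}$ are contiguous in lexicographic order. Knot sets $\mathcal{K}_{j_1,\dots,j_m}\subset\mathcal{I}_{j_1,\dots,j_m}\setminus\mathcal{K}^{0:m-1}$, $|\mathcal{K}_{j_1,\dots,j_m}|=r_m$, chosen sequentially for $m=0,\dots,M$ (with $\mathcal{K}^m=\bigcup\mathcal{K}_{j_1,\dots,j_m}$, $\mathcal{K}^{0:m}=\bigcup_{l\le m}\mathcal{K}^l$) so that all knot sets partition $\mathcal{I}$. The MRD algorithm: for $m=0,\dots,M$, each $(j_1,\dots,j_m)$ and $\ell=0,\dots,m$, compute $\mathbf{W}^\ell_{j_1,\dots,j_m}=\boldsymbol{\Sigma}[\mathcal{I}_{j_1,\dots,j_m},\mathcal{K}_{j_1,\dots,j_\ell}]-\sum_{k=0}^{\ell-1}\mathbf{W}^k_{j_1,\dots,j_m}(\mathbf{V}^k_{j_1,\dots,j_k})^{-1}(\mathbf{V}^k_{j_1,\dots,j_\ell})'$,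 $\mathbf{V}^\ell_{j_1,\dots,j_m}=\boldsymbol{\Sigma}[\mathcal{K}_{j_1,\dots,j_m},\mathcal{K}_{j_1,\dots,j_\ell}]-\sum_{k=0}^{\ell-1}\mathbf{V}^k_{j_1,\dots,j_m}(\mathbf{V}^k_{j_1,\dots,j_k})^{-1}(\mathbf{V}^k_{j_1,\dots,j_\ell})'$, then set $\mathbf{B}_{j_1,\dots,j_m}=\mathbf{W}^m_{j_1,\dots,j_m}(\mathbf{V}^m_{j_1,\dots,j_m})^{-1/2}$; output $\mathbf{B}=(\mathbf{B}^M,\dots,\mathbf{B}^0)$ with $\mathbf{B}^m=\mathrm{blockdiag}(\{\mathbf{B}_{j_1,\dots,j_m}\})$ in lexicographic order. *)

From HB Require Import structures.
From mathcomp Require Import all_boot all_order all_algebra.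
Set Implicit Arguments. Unset Strict Implicit. Unset Printing Implicit Defensive.
Import Order.TTheory GRing.Theory Num.Theory.
Local Open Scope ring_scope.

Definition posdef (R : realFieldType) (n : nat) (S : 'M[R]_n) : Prop :=
  S^T = S /\ forall x : 'cV[R]_n, x != 0 -> 0 < (x^T *m S *m x) ord0 ord0.

(* A region I_{j1..jm} is represented by its path p = [:: j1; ...; jm]       *)
(* (a seq 'I_J of size m <= M).  The nested partition is encoded by          *)
(* reg : 'I_n -> M.-tuple 'I_J giving the finest region of each index, so    *)
(*   i \in I_p  <->  take (size p) (reg i) = p.                              *)
(* Knot sets: kn p : 'I_r -> 'I_n enumerates K_p (|K_p| = r).                *)
Definition in_region (n M J : nat) (reg : 'I_n -> M.-tuple 'I_J)
  (p : seq 'I_J) (i : 'I_n) : bool := take (size p) (reg i) == p.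

Definition mrd_structure (n M J r : nat) (reg : 'I_n -> M.-tuple 'I_J)
  (kn : seq 'I_J -> 'I_r -> 'I_n) : Prop :=
  [/\ (* |K_p| = r *)
      forall p, (size p <= M)%N -> injective (kn p),
      forall p a, (size p <= M)%N -> in_region reg p (kn p a),
      forall p q a b, (size p <= M)%N -> (size q <= M)%N ->
        kn p a = kn q b -> p = q &
      forall i, exists p a, (size p <= M)%N /\ kn p a = i].

(* The MRD recursion.  mrdWV f l p = (W^l_p, V^l_p) where f is fuel (any     *)
(* f > l suffices; we use f = l.+1).  W^l_p is stored as an n x r matrix     *)
(* whose row i is given by the defining formula; only rows i \in I_p are    *)
(* part of W^l_p and only those are used below.                              *)
Section MRD.
Variables (R : realFieldType) (n J r : nat).
Variable (kn : seq 'I_J -> 'I_r -> 'I_n).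
Variable (S : 'M[R]_n).

Fixpoint mrdWV (f l : nat) (p : seq 'I_J) : 'M[R]_(n, r) * 'M[R]_r :=
  match f with
  | 0 => (0, 0)
  | f'.+1 =>
    ( \matrix_(i, b) S i (kn (take l p) b)
        - \sum_(k < l) ((mrdWV f' k p).1
                        *m invmx (mrdWV f' k (take k p)).2
                        *m ((mrdWV f' k (take l p)).2)^T),
      \matrix_(a, b) S (kn p a) (kn (take l p) b)
        - \sum_(k < l) ((mrdWV f' k p).2
                        *m invmx (mrdWV f' k (take k p)).2
                        *m ((mrdWV f' k (take l p)).2)^T) )
  end.

Definition mrdW (l : nat) (p : seq 'I_J) : 'M[R]_(n, r) := (mrdWV l.+1 l p).1.
Definition mrdV (l : nat) (p : seq 'I_J) : 'M[R]_r := (mrdWV l.+1 l p).2.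
End MRD.

(* B_p = W^m_p (V^m_p)^{-1/2} with m = size p; the inverse square root is   *)
(* an arbitrary given operation isq on r x r matrices.                       *)
Definition mrdBlock (R : realFieldType) (n J r : nat)
  (isq : 'M[R]_r -> 'M[R]_r) (kn : seq 'I_J -> 'I_r -> 'I_n) (S : 'M[R]_n)
  (p : seq 'I_J) : 'M[R]_(n, r) :=
  mrdW kn S (size p) p *m isq (mrdV kn S (size p) p).

(* The full matrix B = (B^M, ..., B^0): its column indexed by (p, a), with   *)
(* size p <= M, is the a-th column of the block B_p on rows I_p and 0 on     *)
(* the other rows (block-diagonal structure of B^m).                         *)
Definition mrd (R : realFieldType) (n M J r : nat)
  (isq : 'M[R]_r -> 'M[R]_r) (reg : 'I_n -> M.-tuple 'I_J)
  (kn : seq 'I_J -> 'I_r -> 'I_n) (S : 'M[R]_n)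
  (i : 'I_n) (p : seq 'I_J) (a : 'I_r) : R :=
  if in_region reg p i then mrdBlock isq kn S p i a else 0.

(* Cost model: straight-line programs (algebraic complexity).                *)
Inductive opnd (n : nat) : Type :=
| OInp of 'I_n & 'I_n
| OReg of nat
| OZero.

(* Instructions: scalar +, -, * (cost 1 each) and, on r x r blocks,          *)
(* matrix inversion and the inverse square root (cost r^3 each).  Each      *)
(* instruction appends its result(s) to the register file (blocks in        *)
(* row-major order).                                                         *)
Inductive instr (n r : nat) : Type :=
| IAdd of opnd n & opnd n
| ISub of opnd n & opnd n
| IMul of opnd n & opnd n
| IInv of ('I_r -> 'I_r -> opnd n)
| IIsq of ('I_r -> 'I_r -> opnd n).

Definition instr_cost (n r : nat) (c : instr n r) : nat :=
  match c with
  | IAdd _ _ | ISub _ _ | IMul _ _ => 1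
  | IInv _ | IIsq _ => r ^ 3
  end%N.

Definition prog_cost (n r : nat) (P : seq (instr n r)) : nat :=
  (\sum_(c <- P) instr_cost c)%N.

Section Eval.
Variables (R : realFieldType) (n r : nat).
Variable (isq : 'M[R]_r -> 'M[R]_r).
Variable (S : 'M[R]_n).

Definition eval_opnd (regs : seq R) (x : opnd n) : R :=
  match x with
  | OInp i j => S i j
  | OReg k => nth 0 regs k
  | OZero => 0
  end.

Definition flat_mx (A : 'M[R]_r) : seq R :=
  flatten [seq [seq A a b | b <- enum 'I_r] | a <- enum 'I_r].

Definition exec_instr (regs : seq R) (c : instr n r) : seq R :=
  match c with
  | IAdd x y => rcons regs (eval_opnd regs x + eval_opnd regs y)
  | ISub x y => rcons regs (eval_opnd regs x - eval_opnd regs y)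
  | IMul x y => rcons regs (eval_opnd regs x * eval_opnd regs y)
  | IInv f => regs ++ flat_mx (invmx (\matrix_(a, b) eval_opnd regs (f a b)))
  | IIsq f => regs ++ flat_mx (isq (\matrix_(a, b) eval_opnd regs (f a b)))
  end.

Definition run_prog (P : seq (instr n r)) : seq R := foldl exec_instr [::] P.
End Eval.

From HB Require Import structures.
From mathcomp Require Import all_boot all_order all_algebra zify.
Set Implicit Arguments. Unset Strict Implicit. Unset Printing Implicit Defensive.
Import Order.TTheory GRing.Theory Num.Theory.
Local Open Scope ring_scope.

(* Write W_l(i) for row i of W^l_p, p the finest region of i: it only depends
   on the level-l region of i, and the knot rows of V^k_q are the rows W_k(x)
   at the knots x of q.  The recursion for W^l then expresses each entry of
   W_l(i) through S, the entries of W_k(x) and the rows U_k(i) = W_k(i) (V^k)^-1,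
   k < l, at cost O(l r).  Level by level, the program computes all entries of
   W_l (cost O(l n r^2)), then (V^l_q)^-1 and (V^l_q)^-1/2 for the J^l <= n/r
   regions q of level l (cost O(n r^2)), then the rows U_l(i) and
   B_l(i) = W_l(i) (V^l)^-1/2 (cost O(n r^2)); over the M + 1 levels this is
   O(n (M + 1)^2 r^2) = O(n N^2). *)

Section MRDRecursion.
Variables (R : realFieldType) (n J r : nat).
Variables (kn : seq 'I_J -> 'I_r -> 'I_n) (S : 'M[R]_n).
Local Notation WV := (mrdWV kn S).

Lemma mrdWV_fuel f g l p : (l < f)%N -> (l < g)%N -> WV f l p = WV g l p.
Proof.
elim: f g l p => [|f IH] [|g] l p //= lf lg.
congr (_, _); congr (_ - _); apply: eq_bigr => k _;
  by rewrite !(IH g k) ?(leq_trans (ltn_ord k) lf) ?(leq_trans (ltn_ord k) lg).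
Qed.

Lemma mrdWV_knot f l p a b : (WV f l p).2 a b = (WV f l p).1 (kn p a) b.
Proof.
elim: f l p a b => [|f IH] l p a b /=; first by rewrite !mxE.
rewrite !mxE !summxE; congr (_ - _); apply: eq_bigr => k _.
rewrite !mxE; apply: eq_bigr => j _; rewrite !mxE; congr (_ * _).
by apply: eq_bigr => i _; rewrite IH.
Qed.

Lemma mrdWV_take f l p : (WV f l p).1 = (WV f l (take l p)).1.
Proof.
elim: f l p => [|f IH] l p //=.
rewrite take_takel //; congr (_ - _); apply: eq_bigr => k _.
by rewrite (IH k p) (IH k (take l p)) !take_takel // ltnW.
Qed.

Lemma mrdV_knot l p a b : mrdV kn S l p a b = mrdW kn S l p (kn p a) b.
Proof. exact: mrdWV_knot. Qed.

Lemma mrdW_take l p : mrdW kn S l p = mrdW kn S l (take l p).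
Proof. exact: mrdWV_take. Qed.

Lemma mrdW_rec l p : mrdW kn S l p =
  \matrix_(i, b) S i (kn (take l p) b)
  - \sum_(k < l) (mrdW kn S k p *m invmx (mrdV kn S k (take k p))
                  *m (mrdV kn S k (take l p))^T).
Proof.
rewrite /mrdW /=; congr (_ - _); apply: eq_bigr => k _.
by rewrite /mrdV !(@mrdWV_fuel l k.+1).
Qed.
End MRDRecursion.

Section MRDStructure.
Variables (R : realFieldType) (n M J r : nat).
Variables (reg : 'I_n -> M.-tuple 'I_J) (kn : seq 'I_J -> 'I_r -> 'I_n).
Variable (S : 'M[R]_n).
Hypothesis HS : mrd_structure reg kn.

Lemma take_reg_knot p a : (size p <= M)%N -> take (size p) (reg (kn p a)) = p.
Proof. by case: HS => _ inK _ _ sp; apply/eqP/inK. Qed.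

Lemma mrdV_finest k q a c : (size q <= M)%N -> (k <= size q)%N ->
  mrdV kn S k q a c = mrdW kn S k (reg (kn q a)) (kn q a) c.
Proof.
move=> sq kq; have e : take k (reg (kn q a)) = take k q.
  by rewrite -{2}(take_reg_knot a sq) take_takel.
by rewrite mrdV_knot mrdW_take (mrdW_take kn S k (reg _)) e.
Qed.

Lemma mrdW_finest_rec l i b (x := kn (take l (reg i)) b) : (l <= M)%N ->
  mrdW kn S l (reg i) i b = S i x
  - \sum_(k < l) \sum_(c < r)
      (mrdW kn S k (reg i) *m invmx (mrdV kn S k (take k (reg i)))) i c
      * mrdW kn S k (reg x) x c.
Proof.
move=> lM; rewrite mrdW_rec !mxE summxE; congr (_ - _); apply: eq_bigr => k _.
rewrite mxE; apply: eq_bigr => c _.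
by rewrite [X in _ * X]mxE mrdV_finest ?size_takel ?size_tuple // ltnW.
Qed.

Lemma level_knots_le l : (l <= M)%N -> (J ^ l * r <= n)%N.
Proof.
move=> lM; case: HS => knI _ knD _.
pose f (x : l.-tuple 'I_J * 'I_r) := kn x.1 x.2.
have /leq_card : injective f.
  move=> [t1 a1] [t2 a2] /= e.
  have /val_inj e1 : tval t1 = tval t2 by apply: (knD _ _ a1 a2); rewrite ?size_tuple.
  by subst t2; congr (_, _); apply: (knI t1); rewrite ?size_tuple.
by rewrite card_prod card_tuple !card_ord.
Qed.
End MRDStructure.

Section Compiler.
Variables (n r : nat) (K B : eqType).

Inductive src :=
| SInp of 'I_n & 'I_n
| SKey of K
| SEnt of B & 'I_r & 'I_r
| SZero.

(* [Lin k add base ts] defines the scalar [k] as [base + \sum_(t <- ts) t.1 * t.2],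
   or as [base - ...] when [~~ add]; [Blk b s f] defines the block [b] as [isq] (if
   [s]) or [invmx] of the r x r matrix of sources [f]. *)
Inductive defn :=
| Lin of K & bool & src & seq (src * src)
| Blk of B & bool & ('I_r -> 'I_r -> src).

Definition target (d : defn) : K + B :=
  match d with Lin k _ _ _ => inl k | Blk b _ _ => inr b end.

Definition defn_cost (d : defn) : nat :=
  match d with Lin _ _ _ ts => 2 * size ts | Blk _ _ _ => r ^ 3 end.

Definition width (c : instr n r) : nat :=
  match c with IInv _ | IIsq _ => r * r | _ => 1 end.

Definition nregs (P : seq (instr n r)) : nat := \sum_(c <- P) width c.

Fixpoint lin_code (add : bool) (m : nat) (acc : opnd n)
    (ts : seq (opnd n * opnd n)) : seq (instr n r) * opnd n :=
  if ts is (x, y) :: ts' then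
    let rest := lin_code add m.+2 (OReg n m.+1) ts' in
    (@IMul n r x y :: (if add then @IAdd n r else @ISub n r) acc (OReg n m) :: rest.1,
     rest.2)
  else ([::], acc).

Record state := State {
  code : seq (instr n r);
  env : K -> opnd n;
  benv : B -> 'I_r -> 'I_r -> opnd n }.

Definition loc (st : state) (s : src) : opnd n :=
  match s with
  | SInp i j => OInp i j
  | SKey k => env st k
  | SEnt b a c => benv st b a c
  | SZero => OZero n
  end.

Definition step (st : state) (d : defn) : state :=
  match d with
  | Lin k add base ts =>
    let lc := lin_code add (nregs (code st)) (loc st base)
                [seq (loc st t.1, loc st t.2) | t <- ts] in
    State (code st ++ lc.1) [eta env st with k |-> lc.2] (benv st)
  | Blk b s f =>
    let m := nregs (code st) in
    let ins := (if s then @IIsq n r else @IInv n r) (fun a c => loc st (f a c)) in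
    State (rcons (code st) ins) (env st)
      [eta benv st with b |-> fun a c : 'I_r => OReg n (m + (a * r + c))]
  end.

Definition empty_state : state := State [::] (fun _ => OZero n) (fun _ _ _ => OZero n).

Definition compile (ds : seq defn) : state := foldl step empty_state ds.

Lemma prog_cost_lin_code add m acc ts :
  prog_cost (lin_code add m acc ts).1 = (2 * size ts)%N.
Proof.
elim: ts m acc => [|[x y] ts IH] m acc /=; first by rewrite /prog_cost big_nil.
by rewrite /prog_cost !big_cons -/(prog_cost _) IH; case: (add) => /=; lia.
Qed.

Lemma prog_cost_step st d :
  prog_cost (code (step st d)) = (prog_cost (code st) + defn_cost d)%N.
Proof.
rewrite /prog_cost; case: d => [k add base ts|b s f] /=.
  by rewrite big_cat -!/(prog_cost _) prog_cost_lin_code size_map.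
by rewrite -cats1 big_cat big_seq1; case: s.
Qed.

Lemma prog_cost_compile ds :
  prog_cost (code (compile ds)) = (\sum_(d <- ds) defn_cost d)%N.
Proof.
suff gen st : prog_cost (code (foldl step st ds)) =
              (prog_cost (code st) + \sum_(d <- ds) defn_cost d)%N.
  by rewrite /compile gen /prog_cost big_nil.
elim: ds st => [|d ds IH] st /=; first by rewrite big_nil addn0.
by rewrite IH prog_cost_step big_cons addnA.
Qed.

Lemma map_target_codom (T : finType) (f : T -> defn) :
  map target (codom f) = codom (target \o f).
Proof. by rewrite !codomE map_comp. Qed.

Lemma sum_cost_codom_le (T : finType) (f : T -> defn) c :
  (forall x, defn_cost (f x) <= c)%N -> (\sum_(d <- codom f) defn_cost d <= #|T| * c)%N.
Proof. by move=> fc; rewrite codomE big_map big_enum -sum_nat_const; apply: leq_sum. Qed.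
End Compiler.

Arguments SInp {n r K B}.
Arguments SKey {n r K B}.
Arguments SEnt {n r K B}.
Arguments SZero {n r K B}.
Arguments Lin {n r K B}.
Arguments Blk {n r K B}.
Arguments step {n r K B}.
Arguments target {n r K B}.

Section Semantics.
Variables (R : realFieldType) (n r : nat) (K B : eqType).
Variables (isq : 'M[R]_r -> 'M[R]_r) (S : 'M[R]_n).
Variables (valK : K -> R) (valB : B -> 'M[R]_r).

Local Notation exec := (exec_instr isq S).
Local Notation run := (foldl exec).
Local Notation ev := (eval_opnd S).
Local Notation src := (src n r K B).
Local Notation defn := (defn n r K B).
Local Notation state := (state n r K B).

Definition bounded (m : nat) (o : opnd n) : bool :=
  if o is OReg k then (k < m)%N else true.

Lemma bounded_mono m m' o : (m <= m')%N -> bounded m o -> bounded m' o.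
Proof. by case: o => //= k mm' km; apply: leq_trans km mm'. Qed.

Lemma shape_flat_mx (A : 'M[R]_r) :
  shape [seq [seq A a b | b <- enum 'I_r] | a <- enum 'I_r] = nseq r r.
Proof.
set rows := [seq [seq A a b | b <- enum 'I_r] | a <- enum 'I_r].
have /all_pred1P -> : all (pred1 r) (shape rows).
  by apply/allP => _ /mapP[_ /mapP[a _ ->] ->]; rewrite /= size_map size_enum_ord.
by rewrite !size_map -enumT size_enum_ord.
Qed.

Lemma size_flat_mx (A : 'M[R]_r) : size (flat_mx A) = (r * r)%N.
Proof. by rewrite size_flatten shape_flat_mx sumn_nseq. Qed.

Lemma nth_flat_mx (A : 'M[R]_r) (a b : 'I_r) : nth 0 (flat_mx A) (a * r + b) = A a b.
Proof.
have ab : (b < nth 0%N (nseq r r) a)%N by rewrite nth_nseq ltn_ord.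
have -> : (a * r + b = flatten_index (nseq r r) a b)%N.
  by rewrite /flatten_index /= take_nseq ?sumn_nseq 1?mulnC // ltnW.
rewrite nth_flatten shape_flat_mx flatten_indexKl // flatten_indexKr //.
rewrite (nth_map a) ?size_enum_ord // nth_ord_enum.
by rewrite (nth_map b) ?size_enum_ord // nth_ord_enum.
Qed.

Lemma size_exec regs c : size (exec regs c) = (size regs + width c)%N.
Proof. by case: c => * /=; rewrite ?size_rcons ?addn1 // size_cat size_flat_mx. Qed.

Lemma size_run regs P : size (run regs P) = (size regs + nregs P)%N.
Proof.
elim: P regs => [|c P IH] regs /=; first by rewrite /nregs big_nil addn0.
by rewrite IH size_exec /nregs big_cons addnA.
Qed.

Lemma prefix_run regs P : prefix regs (run regs P).
Proof.
elim: P regs => [|c P IH] regs /=; first exact: prefix_refl.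
apply: prefix_trans (IH _).
by case: c => * /=; rewrite ?prefix_rcons ?prefix_prefix.
Qed.

Lemma eval_prefix regs regs' o :
  prefix regs regs' -> bounded (size regs) o -> ev regs' o = ev regs o.
Proof. by case/prefixP => e ->; case: o => //= k kl; rewrite nth_cat kl. Qed.

Definition addsub (add : bool) (x y : R) := if add then x + y else x - y.

Lemma addsubA add x y z : addsub add (addsub add x y) z = addsub add x (y + z).
Proof. by case: add; rewrite /addsub ?opprD addrA. Qed.

Lemma run_lin_code add regs acc ts (lc := lin_code r add (size regs) acc ts) :
  bounded (size regs) acc ->
  all (fun t => bounded (size regs) t.1 && bounded (size regs) t.2) ts ->
  let regs' := run regs lc.1 in
  bounded (size regs') lc.2 /\
  ev regs' lc.2 = addsub add (ev regs' acc) (\sum_(t <- ts) ev regs' t.1 * ev regs' t.2).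
Proof.
elim: ts regs acc @lc => [|[x y] ts IH] regs acc /= bacc.
  by split=> //; rewrite big_nil /addsub addr0 subr0; case: add.
case/andP=> /andP[bx b_y] bts.
set v := ev regs x * ev regs y.
have e2 : exec (exec regs (@IMul n r x y))
              ((if add then @IAdd n r else @ISub n r) acc (OReg n (size regs)))
          = regs ++ [:: v; addsub add (ev regs acc) v].
  have eacc : ev (rcons regs v) acc = ev regs acc := eval_prefix (prefix_rcons _ _) bacc.
  by case: (add); rewrite /= -/v eacc nth_rcons ltnn eqxx -!cats1 -catA.
rewrite e2; set regs2 := regs ++ _.
have sz2 : size regs2 = (size regs).+2 by rewrite size_cat addn2.
rewrite -sz2; set regs' := run regs2 _.
have pre : prefix regs regs' := prefix_trans (prefix_prefix _ _) (prefix_run _ _).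
have le2 : (size regs <= size regs2)%N by rewrite sz2 leqW.
have bacc2 : bounded (size regs2) (OReg n (size regs).+1) by rewrite /= sz2.
have bts2 : all (fun t => bounded (size regs2) t.1 && bounded (size regs2) t.2) ts.
  by apply: sub_all bts => t /andP[b1 b2]; rewrite !(bounded_mono le2).
have [bres eres] := IH regs2 _ bacc2 bts2.
split=> //; rewrite eres big_cons -addsubA.
have -> : ev regs' (OReg n (size regs).+1) = addsub add (ev regs acc) v.
  by rewrite (eval_prefix (prefix_run _ _)) /= ?sz2 // nth_cat ltnNge leqnSn /= subSnn.
by rewrite /v !(eval_prefix pre).
Qed.

Definition mx_op (s : bool) : 'M[R]_r -> 'M[R]_r := if s then isq else invmx.

Definition sval (s : src) : R :=
  match s with
  | SInp i j => S i j
  | SKey k => valK k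
  | SEnt b a c => valB b a c
  | SZero => 0
  end.

Definition available (D : pred (K + B)) (s : src) : bool :=
  match s with SKey k => D (inl k) | SEnt b _ _ => D (inr b) | _ => true end.

Definition defn_ok (D : pred (K + B)) (d : defn) : bool :=
  match d with
  | Lin k add base ts =>
    [&& available D base, all (fun t => available D t.1 && available D t.2) ts
      & valK k == addsub add (sval base) (\sum_(t <- ts) sval t.1 * sval t.2)]
  | Blk b s f =>
    [forall a, forall c, available D (f a c)]
      && (valB b == mx_op s (\matrix_(a, c) sval (f a c)))
  end.

Definition state_ok (st : state) (D : pred (K + B)) : Prop :=
  let regs := run_prog isq S (code st) in
  (forall s, bounded (size regs) (loc st s)) /\
  (forall s, available D s -> ev regs (loc st s) = sval s).

Lemma available_mono (D1 D2 : pred (K + B)) s :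
  {subset D1 <= D2} -> available D1 s -> available D2 s.
Proof. by move=> sub; case: s => //= *; apply: sub. Qed.

Lemma defn_ok_mono (D1 D2 : pred (K + B)) d :
  {subset D1 <= D2} -> defn_ok D1 d -> defn_ok D2 d.
Proof.
move=> sub; have av := @available_mono _ _ ^~ sub.
case: d => [k add base ts|b s f] /=.
  case/and3P=> /av -> ats ->; rewrite andbT /=.
  by apply: sub_all ats => t /andP[/av -> /av ->].
by case/andP=> /forallP fa ->; rewrite andbT; apply/forallP => a; apply/forallP => c;
  apply: av; move/forallP: (fa a).
Qed.

Lemma state_ok_sub st (D1 D2 : pred (K + B)) :
  {subset D1 <= D2} -> state_ok st D2 -> state_ok st D1.
Proof. by move=> sub [bnd ok]; split=> // s /(available_mono sub)/ok. Qed.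

Lemma state_ok_empty : state_ok (empty_state n r K B) pred0.
Proof. by split=> -[]. Qed.

Lemma eval_loc_prefix st D regs s : state_ok st D ->
  prefix (run_prog isq S (code st)) regs -> available D s -> ev regs (loc st s) = sval s.
Proof. by move=> [bnd ok] pre /ok <-; apply: eval_prefix pre (bnd s). Qed.

Section Step.
Variables (st : state) (D : pred (K + B)).
Hypothesis st_ok : state_ok st D.
Local Notation regs := (run_prog isq S (code st)).

Lemma size_regs : size regs = nregs (code st).
Proof. by rewrite size_run. Qed.

Lemma step_lin_ok k add base ts : defn_ok D (Lin k add base ts) ->
  state_ok (step st (Lin k add base ts)) [pred x | D x || (x == inl k)].
Proof.
case/and3P=> abase ats /eqP vk; have [bnd _] := st_ok.
have bts : all (fun t => bounded (size regs) t.1 && bounded (size regs) t.2)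
               [seq (loc st t.1, loc st t.2) | t <- ts].
  by apply: all_mapT => t /=; rewrite !bnd.
have := run_lin_code add (bnd base) bts; rewrite size_regs.
set lc := lin_code _ _ _ _ _ => -[bres eres].
rewrite /state_ok /= /run_prog foldl_cat -/(run_prog _ _ _).
have pre : prefix regs (run regs lc.1) := prefix_run _ _.
have old := eval_loc_prefix st_ok pre.
split=> [[i j|k'|b a c|] //=|[i j|k'|b a c|] //=].
- by case: eqP => _ //; exact: (bounded_mono (size_prefix pre) (bnd (SKey k'))).
- exact: bounded_mono (size_prefix pre) (bnd (SEnt b a c)).
- move=> ak; have [->|nk] := eqVneq k' k; last first.
    by rewrite -[_ == _]/(k' == k) (negPf nk) orbF in ak; apply: (old (SKey k')).
  rewrite eres vk (old base) // big_map -(all_filterP ats) !big_filter.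
  by congr addsub; apply: eq_bigr => t /andP[a1 a2]; rewrite (old _ a1) (old _ a2).
- by case/orP=> [ab|/eqP//]; apply: (old (SEnt b a c)).
Qed.

Lemma step_blk_ok b s f : defn_ok D (Blk b s f) ->
  state_ok (step st (Blk b s f)) [pred x | D x || (x == inr b)].
Proof.
case/andP=> /forallP af /eqP vb; have [bnd _] := st_ok.
pose A := \matrix_(a, c) ev regs (loc st (f a c)).
have eA : A = \matrix_(a, c) sval (f a c).
  apply/matrixP => a c; rewrite !mxE; apply: (eval_loc_prefix st_ok (prefix_refl _)).
  by move/forallP: (af a).
have run_blk : run_prog isq S (code (step st (Blk b s f))) = regs ++ flat_mx (mx_op s A).
  by rewrite /run_prog /= -cats1 foldl_cat; case: (s).
rewrite /state_ok run_blk.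
have pre : prefix regs (regs ++ flat_mx (mx_op s A)) := prefix_prefix _ _.
have old := eval_loc_prefix st_ok pre.
split=> [[i j|k|b' a c|] //=|[i j|k|b' a c|] //=].
- exact: bounded_mono (size_prefix pre) (bnd (SKey k)).
- case: eqP => _ /=; last exact: bounded_mono (size_prefix pre) (bnd (SEnt b' a c)).
  rewrite size_cat size_flat_mx size_regs ltn_add2l.
  by have := ltn_ord a; have := ltn_ord c; nia.
- by case/orP=> [ak|/eqP//]; apply: (old (SKey k)).
- move=> ab; have [->|nb] := eqVneq b' b; last first.
    by rewrite -[_ == _]/(b' == b) (negPf nb) orbF in ab; apply: (old (SEnt b' a c)).
  by rewrite /= nth_cat size_regs ltnNge leq_addr /= addKn nth_flat_mx vb eA.
Qed.
End Step.

Lemma step_ok st D d : state_ok st D -> defn_ok D d ->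
  state_ok (step st d) [pred x | D x || (x == target d)].
Proof.
move=> st_ok; case: d => [k add base ts|b s f] d_ok.
  exact: (step_lin_ok st_ok d_ok).
exact: (step_blk_ok st_ok d_ok).
Qed.

Lemma foldl_step_ok st D ds : state_ok st D -> all (defn_ok D) ds ->
  state_ok (foldl step st ds) [pred x | D x || (x \in map target ds)].
Proof.
elim: ds st D => [|d ds IH] st D H /=.
  by move=> _; apply: state_ok_sub H => x; rewrite !inE orbF.
case/andP=> sd sds; have D_sub : {subset D <= [pred x | D x || (x == target d)]}.
  by move=> x xD; apply/orP; left.
apply: state_ok_sub (IH _ _ (step_ok H sd) (sub_all (fun e => defn_ok_mono D_sub) sds)).
by move=> x; rewrite !inE orbA.
Qed.

Lemma compile_layers_ok (layer : nat -> seq defn) (rank : K + B -> nat) T :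
  (forall t, (t < T)%N -> all (defn_ok [pred x | rank x < t]%N) (layer t)) ->
  (forall x, (rank x < T)%N -> x \in map target (layer (rank x))) ->
  state_ok (compile (flatten [seq layer t | t <- iota 0 T])) [pred x | rank x < T]%N.
Proof.
elim: T => [|T IH] layer_ok layer_cover.
  by apply: state_ok_sub state_ok_empty.
rewrite -addn1 iotaD map_cat flatten_cat /compile foldl_cat /= cats0 addn1.
have H := IH (fun t tT => layer_ok t (ltnW tT)) (fun x xT => layer_cover x (ltnW xT)).
apply: state_ok_sub (foldl_step_ok H (layer_ok T (ltnSn T))) => x /=.
rewrite !inE ltnS leq_eqVlt => /orP[/eqP eT|-> //].
by rewrite -eT layer_cover ?orbT // eT.
Qed.
End Semantics.

Section MRDProgram.
Variables (n M J r : nat) (reg : 'I_n -> M.-tuple 'I_J) (kn : seq 'I_J -> 'I_r -> 'I_n).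

(* The key [(o, l, i, c)] names the entry [(i, c)] of [W^l_p], [W^l_p (V^l)^-1] or
   [W^l_p (V^l)^-1/2] (for [o] = [None], [Some false], [Some true]), where [p] is
   the finest region of [i]; the block [(s, q)] names [(V^|q|_q)^-1] or its inverse
   square root. *)
Definition mrd_key := (option bool * nat * 'I_n * 'I_r)%type.
Definition mrd_block := (bool * seq 'I_J)%type.
Local Notation defn := (defn n r mrd_key mrd_block).

Definition knot l i b := kn (take l (reg i)) b.

Definition layerW l : seq defn := codom (fun x : 'I_n * 'I_r =>
  let: (i, b) := x in
  Lin (None, l, i, b) false (SInp i (knot l i b))
    (codom (fun kc : 'I_l * 'I_r =>
       (SKey (Some false, nat_of_ord kc.1, i, kc.2),
        SKey (None, nat_of_ord kc.1, knot l i b, kc.2))))).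

Definition layerB l : seq defn := codom (fun x : l.-tuple 'I_J * bool =>
  let: (q, s) := x in
  Blk (s, tval q) s (fun a c => SKey (None, l, kn q a, c))).

Definition layerU l : seq defn := codom (fun x : bool * 'I_n * 'I_r =>
  let: (s, i, c) := x in
  Lin (Some s, l, i, c) true SZero
    (codom (fun d : 'I_r => (SKey (None, l, i, d), SEnt (s, take l (reg i)) d c)))).

Definition mrd_layer t : seq defn :=
  match (t %% 3)%N with
  | 0 => layerW (t %/ 3)%N
  | 1 => layerB (t %/ 3)%N
  | _ => layerU (t %/ 3)%N
  end.

Definition mrd_rank (x : mrd_key + mrd_block) : nat :=
  match x with
  | inl (None, l, _, _) => 3 * l
  | inr (_, q) => 3 * size q + 1
  | inl (Some _, l, _, _) => 3 * l + 2
  end.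

Definition mrd_program : seq defn := flatten [seq mrd_layer t | t <- iota 0 (3 * M.+1)].

Lemma mrd_layerE l :
  [/\ mrd_layer (3 * l) = layerW l, mrd_layer (3 * l + 1) = layerB l
    & mrd_layer (3 * l + 2) = layerU l].
Proof.
rewrite /mrd_layer.
have [-> ->] : ((3 * l) %% 3 = 0 /\ (3 * l) %/ 3 = l)%N by split; lia.
have [-> ->] : ((3 * l + 1) %% 3 = 1 /\ (3 * l + 1) %/ 3 = l)%N by split; lia.
by have [-> ->] : ((3 * l + 2) %% 3 = 2 /\ (3 * l + 2) %/ 3 = l)%N by split; lia.
Qed.

Lemma mrd_layer_cover x : x \in map target (mrd_layer (mrd_rank x)).
Proof.
case: x => [[[[[s|] l] i] c]|[s q]] /=.
- case: (mrd_layerE l) => _ _ ->; rewrite map_target_codom.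
  by apply/codomP; exists (s, i, c).
- case: (mrd_layerE l) => -> _ _; rewrite map_target_codom.
  by apply/codomP; exists (i, c).
- case: (mrd_layerE (size q)) => _ -> _; rewrite map_target_codom.
  by apply/codomP; exists (in_tuple q, s).
Qed.

Hypothesis HS : mrd_structure reg kn.

Lemma mrd_layer_cost t : (t < 3 * M.+1)%N ->
  (\sum_(d <- mrd_layer t) defn_cost d <= 4 * n * r ^ 2 * M.+1)%N.
Proof.
have [l [j [-> j3]]] : exists l j, t = (3 * l + j)%N /\ (j < 3)%N.
  by exists (t %/ 3)%N, (t %% 3)%N; split; lia.
move=> tM; have lM : (l <= M)%N by lia.
case: j j3 tM => [|[|[|//]]] _ _; rewrite ?addn0; case: (mrd_layerE l) => eW eB eU.
- rewrite eW; apply: leq_trans (sum_cost_codom_le (c := 2 * (l * r)) _) _.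
    by move=> [i b]; rewrite /= size_codom card_prod !card_ord.
  by rewrite card_prod !card_ord; nia.
- rewrite eB; apply: leq_trans (sum_cost_codom_le (c := r ^ 3) _) _ => [[q s]|] //.
  by rewrite card_prod card_tuple card_bool !card_ord; have := level_knots_le HS lM; nia.
- rewrite eU; apply: leq_trans (sum_cost_codom_le (c := 2 * r) _) _.
    by move=> [[s i] c]; rewrite /= size_codom card_ord.
  by rewrite !card_prod card_bool !card_ord; nia.
Qed.

Lemma mrd_program_cost :
  (prog_cost (code (compile mrd_program)) <= 12 * n * (M.+1 * r) ^ 2)%N.
Proof.
rewrite prog_cost_compile big_flatten big_map.
apply: (@leq_trans (\sum_(t <- iota 0 (3 * M.+1)) 4 * n * r ^ 2 * M.+1)%N).
  rewrite !big_seq; apply: leq_sum => t; rewrite mem_iota => /andP[_ tM].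
  exact: mrd_layer_cost.
by rewrite big_const_seq count_predT size_iota iter_addn_0 expnMn; nia.
Qed.
End MRDProgram.

Section MRDValues.
Variables (R : realFieldType) (n M J r : nat).
Variables (reg : 'I_n -> M.-tuple 'I_J) (kn : seq 'I_J -> 'I_r -> 'I_n).
Variables (isq : 'M[R]_r -> 'M[R]_r) (S : 'M[R]_n).
Hypothesis HS : mrd_structure reg kn.

Definition mrd_key_val (x : mrd_key n r) : R :=
  let: (o, l, i, c) := x in
  if o is Some s
  then (mrdW kn S l (reg i) *m mx_op isq s (mrdV kn S l (take l (reg i)))) i c
  else mrdW kn S l (reg i) i c.

Definition mrd_block_val (y : mrd_block J) : 'M[R]_r :=
  mx_op isq y.1 (mrdV kn S (size y.2) y.2).

Local Notation defn_ok := (defn_ok isq S mrd_key_val mrd_block_val).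

Lemma mrd_layer_ok t : (t < 3 * M.+1)%N ->
  all (defn_ok [pred x | mrd_rank x < t]%N) (mrd_layer reg kn t).
Proof.
have [l [j [-> j3]]] : exists l j, t = (3 * l + j)%N /\ (j < 3)%N.
  by exists (t %/ 3)%N, (t %% 3)%N; split; lia.
move=> tM; have lM : (l <= M)%N by lia.
have size_take_reg i : size (take l (reg i)) = l by rewrite size_takel ?size_tuple.
case: j j3 tM => [|[|[|//]]] _ _; rewrite ?addn0; case: (mrd_layerE reg kn l) => eW eB eU.
- rewrite eW /layerW codomE; apply: all_mapT => -[i b] /=.
  apply/andP; split.
    rewrite codomE; apply: all_mapT => -[k c] /=.
    by have := ltn_ord k; lia.
  apply/eqP; rewrite mrdW_finest_rec //; congr (_ - _).
  by rewrite codomE big_map enumT pair_bigA.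
- rewrite eB /layerB codomE; apply: all_mapT => -[q s] /=.
  apply/andP; split; first by apply/forallP => a; apply/forallP => c /=; lia.
  apply/eqP; congr (mx_op _ _ _); apply/matrixP => a c.
  by rewrite mxE /= (mrdV_finest S HS) ?size_tuple.
- rewrite eU /layerU codomE; apply: all_mapT => -[[s i] c] /=.
  apply/andP; split.
    rewrite codomE; apply: all_mapT => d /=.
    by rewrite size_take_reg; lia.
  apply/eqP; rewrite /addsub add0r codomE big_map big_enum /= mxE.
  by apply: eq_bigr => d _; rewrite /mrd_block_val /= size_take_reg.
Qed.

Definition mrd_out (i : 'I_n) (p : seq 'I_J) (a : 'I_r) : opnd n :=
  if in_region reg p i then env (compile (mrd_program reg kn)) (Some true, size p, i, a)
  else OZero n.

Lemma mrd_out_correct i p a : (size p <= M)%N ->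
  eval_opnd S (run_prog isq S (code (compile (mrd_program reg kn)))) (mrd_out i p a)
  = mrd isq reg kn S i p a.
Proof.
move=> pM; have [_ ok] :=
  compile_layers_ok mrd_layer_ok (fun x _ => mrd_layer_cover reg kn x).
rewrite /mrd_out /mrd; case: ifP => // /eqP reg_p.
rewrite (ok (SKey (Some true, size p, i, a))) /=; last by rewrite /=; lia.
by rewrite /mrdBlock (mrdW_take kn S (size p) (reg i)) reg_p.
Qed.
End MRDValues.

Theorem proposition5 :
  exists C : nat,
  forall (R : realFieldType) (n M J r : nat)
         (reg : 'I_n -> M.-tuple 'I_J) (kn : seq 'I_J -> 'I_r -> 'I_n)
         (isq : 'M[R]_r -> 'M[R]_r),
  mrd_structure reg kn ->
  exists (P : seq (instr n r)) (out : 'I_n -> seq 'I_J -> 'I_r -> opnd n),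
    (prog_cost P <= C * n * ((M.+1) * r) ^ 2)%N /\
    forall S : 'M[R]_n, posdef S ->
      forall (i : 'I_n) (p : seq 'I_J) (a : 'I_r), (size p <= M)%N ->
        eval_opnd S (run_prog isq S P) (out i p a) = mrd isq reg kn S i p a.
Proof.
exists 12%N => R n M J r reg kn isq HS.
exists (code (compile (mrd_program reg kn))), (mrd_out reg kn).
split; first exact: mrd_program_cost.
by move=> S _ i p a; apply: mrd_out_correct.
Qed.
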